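(* Let $g\geq 2$ and let $\mathfrak t_{(g)}(1)$ be the Lie algebra over a field $\mathbb K$ of characteristic zero generated by $x_1,\dots,x_g,y_1,\dots,y_g,t_{11}$ subject to the relations that $t_{11}$ is central and $\sum_{k=1}^g[x_k,y_k]=-(2-2g)t_{11}$. Then the center of $\mathfrak t_{(g)}(1)$ is one-dimensional, spanned by $t_{11}$. *)

From mathcomp Require Import all_boot all_order all_algebra.
Set Implicit Arguments. Unset Strict Implicit. Unset Printing Implicit Defensive.
Import GRing.Theory.
Local Open Scope ring_scope.

Definition is_lie_bracket (K : fieldType) (V : lmodType K) (br : V -> V -> V) : Prop :=
  [/\ (forall (a : K) (u v w : V), br (a *: u + v) w = a *: br u w + br v w),
      (forall (a : K) (u v w : V), br u (a *: v + w) = a *: br u v + br u w),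
      (forall u : V, br u u = 0) &
      (forall u v w : V, br u (br v w) + br v (br w u) + br w (br u v) = 0)].

Definition tg1_relations (K : fieldType) (g : nat) (V : lmodType K)
    (br : V -> V -> V) (x y : 'I_g -> V) (t : V) : Prop :=
  [/\ (forall k, br t (x k) = 0),
      (forall k, br t (y k) = 0) &
      \sum_(k < g) br (x k) (y k) = - ((2%:R - (2 * g)%:R : K) *: t)].

Definition lie_generated (K : fieldType) (V : lmodType K) (br : V -> V -> V)
    (S : V -> Prop) : Prop :=
  forall P : V -> Prop,
    (forall v, S v -> P v) -> P 0 ->
    (forall (a : K) u v, P u -> P v -> P (a *: u + v)) ->
    (forall u v, P u -> P v -> P (br u v)) ->
    forall v, P v.

Definition is_tg1 (K : fieldType) (g : nat) (L : lmodType K)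
    (brL : L -> L -> L) (x y : 'I_g -> L) (t : L) : Prop :=
  [/\ is_lie_bracket brL,
      tg1_relations brL x y t,
      lie_generated brL (fun v => (exists k, v = x k) \/ (exists k, v = y k) \/ v = t) &
      forall (M : lmodType K) (brM : M -> M -> M) (x' y' : 'I_g -> M) (t' : M),
        is_lie_bracket brM -> tg1_relations brM x' y' t' ->
        exists f : L -> M,
          [/\ (forall (a : K) u v, f (a *: u + v) = a *: f u + f v),
              (forall u v, f (brL u v) = brM (f u) (f v)),
              (forall k, f (x k) = x' k),
              (forall k, f (y k) = y' k) &
              f t = t']].

(* The element [t] is nonzero because the relations hold in the Heisenberg
   algebra, with [x_i0], [y_i0] sent to its generators and [t] to a multiple
   of its center.  For the center, the universal property yields two maps.
   First, the degree derivation [E] ([E x_k = x_k], [E y_k = y_k],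
   [E t = 2 t]), a morphism into [L] tensored with the dual numbers: every
   element is a sum of eigenvectors of [E] with positive integer eigenvalues,
   so [E] is injective in characteristic zero.  Second, an action [f] on the
   free associative algebra over the letters [x_k], [y_k]: [t] acts by [0],
   the other generators by left multiplication, except that [x_i0] is
   corrected on words starting with [y_i0] so that the defining relation
   holds.  Mapping words to right-normed brackets turns [f u] into [ad u]
   and the image of the empty word under [f u] into [E u], both modulo [K t].
   If [z] is central, [f z] commutes with left multiplication by letters and
   also with right multiplication by all letters but [y_i0]; this forces
   [f z] to kill the empty word, hence [E z], and then [z], lies in [K t]. *)

From HB Require Import structures.
From mathcomp Require Import all_boot all_order all_algebra.
From mathcomp Require Import finmap.
From mathcomp.multinomials Require Import monalg.
From mathcomp Require Import boolp functions.
From mathcomp Require Import ring zify.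
Set Warnings "-notation-overridden -notation-incompatible-prefix -ambiguous-paths".
Set Implicit Arguments. Unset Strict Implicit. Unset Printing Implicit Defensive.
Import GRing.Theory.
Local Open Scope fset_scope.
Local Open Scope ring_scope.

Section LieBracket.
Variables (K : fieldType) (W : lmodType K) (br : W -> W -> W).
Hypothesis HB : is_lie_bracket br.

Lemma br_linearl w : linear (br^~ w). Proof. by move=> a u v; case: HB => ->. Qed.
Lemma br_linearr u : linear (br u). Proof. by move=> a v w; case: HB => _ ->. Qed.
Lemma br_alt u : br u u = 0. Proof. by case: HB. Qed.
Lemma br_jacobi u v w : br u (br v w) + br v (br w u) + br w (br u v) = 0.
Proof. by case: HB. Qed.

Let brl w : {linear W -> W} :=
  HB.pack (br^~ w) (GRing.isLinear.Build _ _ _ _ _ (br_linearl w)).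
Let brr u : {linear W -> W} :=
  HB.pack (br u) (GRing.isLinear.Build _ _ _ _ _ (br_linearr u)).

Lemma br0l w : br 0 w = 0. Proof. exact: (linear0 (brl w)). Qed.
Lemma br0r w : br w 0 = 0. Proof. exact: (linear0 (brr w)). Qed.
Lemma brDl u v w : br (u + v) w = br u w + br v w. Proof. exact: (linearD (brl w)). Qed.
Lemma brDr u v w : br w (u + v) = br w u + br w v. Proof. exact: (linearD (brr w)). Qed.
Lemma brNl u w : br (- u) w = - br u w. Proof. exact: (linearN (brl w)). Qed.
Lemma brNr u w : br w (- u) = - br w u. Proof. exact: (linearN (brr w)). Qed.
Lemma brBl u v w : br (u - v) w = br u w - br v w. Proof. exact: (linearB (brl w)). Qed.
Lemma brZl a u w : br (a *: u) w = a *: br u w. Proof. exact: (linearZZ (brl w)). Qed.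
Lemma brZr a u w : br w (a *: u) = a *: br w u. Proof. exact: (linearZZ (brr w)). Qed.
Lemma br_suml I (r : seq I) (P : pred I) (F : I -> W) w :
  br (\sum_(i <- r | P i) F i) w = \sum_(i <- r | P i) br (F i) w.
Proof. exact: (linear_sum (brl w)). Qed.
Lemma br_sumr I (r : seq I) (P : pred I) (F : I -> W) w :
  br w (\sum_(i <- r | P i) F i) = \sum_(i <- r | P i) br w (F i).
Proof. exact: (linear_sum (brr w)). Qed.

Lemma brC u v : br u v = - br v u.
Proof.
apply/eqP; rewrite -addr_eq0; apply/eqP.
by have := br_alt (u + v); rewrite brDl !brDr !br_alt add0r addr0.
Qed.

Lemma br_leibniz u v w : br u (br v w) = br (br u v) w + br v (br u w).
Proof.
apply/eqP; rewrite -subr_eq0 opprD addrA; apply/eqP.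
by rewrite -[RHS](br_jacobi u v w) (brC w (br u v)) (brC w u) brNr addrAC.
Qed.

End LieBracket.

Definition lie_closed (K : fieldType) (M : lmodType K) (br : M -> M -> M)
    (P : M -> Prop) :=
  [/\ P 0, forall a u v, P u -> P v -> P (a *: u + v)
         & forall u v, P u -> P v -> P (br u v)].

Lemma lie_generated_image (K : fieldType) (L M : lmodType K)
    (brL : L -> L -> L) (brM : M -> M -> M) (S : L -> Prop)
    (f : {linear L -> M}) (P : M -> Prop) :
  lie_generated brL S -> (forall u v, f (brL u v) = brM (f u) (f v)) ->
  lie_closed brM P -> (forall s, S s -> P (f s)) -> forall u, P (f u).
Proof.
move=> Hgen fB [P0 PD Pbr] PS; elim/Hgen => //; first by rewrite linear0.
  by move=> a u v Pu Pv; rewrite linearP; exact: PD.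
by move=> u v Pu Pv; rewrite fB; exact: Pbr.
Qed.

Section MalgExtension.
Variables (K : fieldType) (T : choiceType) (W : lmodType K).
Local Notation V := {malg K[T]}.
Implicit Types (h : T -> W) (v : V).

Definition malg_ext h v : W := \sum_(k <- msupp v) v@_k *: h k.

Lemma malg_extEw h v (D : {fset T}) : msupp v `<=` D ->
  malg_ext h v = \sum_(k <- D) v@_k *: h k.
Proof.
by move=> sD; apply: big_fset_incl => // k _ /mcoeff_outdom->; rewrite scale0r.
Qed.

Fact malg_ext_is_linear h : linear (malg_ext h).
Proof.
move=> a u v; pose D := msupp u `|` msupp v.
have sD : msupp (a *: u + v) `<=` D.
  exact: fsubset_trans (msuppD_le _ _) (fsetSU _ (msuppZ_le _ _)).
rewrite (malg_extEw h sD) !(@malg_extEw h _ D) ?fsubsetUl ?fsubsetUr //.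
rewrite scaler_sumr -big_split; apply: eq_bigr => k _ /=.
by rewrite mcoeffD mcoeffZ scalerDl scalerA.
Qed.

HB.instance Definition _ h :=
  GRing.isLinear.Build K V W _ (malg_ext h) (malg_ext_is_linear h).

Lemma malg_extU h k : malg_ext h << k >> = h k.
Proof. by rewrite /malg_ext msuppU oner_eq0 big_seq_fset1 mcoeffUU scale1r. Qed.

Lemma malg_ext_funP a h1 h2 v :
  malg_ext (a *: h1 + h2) v = a *: malg_ext h1 v + malg_ext h2 v.
Proof.
rewrite /malg_ext scaler_sumr -big_split; apply: eq_bigr => k _ /=.
by rewrite scalerDr !scalerA mulrC.
Qed.

Lemma malg_ext_funB h1 h2 v :
  malg_ext (fun k => h1 k - h2 k) v = malg_ext h1 v - malg_ext h2 v.
Proof. by rewrite /malg_ext -sumrB; apply: eq_bigr => k _; rewrite scalerBr. Qed.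

Lemma malg_ext_fun0 v : malg_ext (0 : T -> W) v = 0.
Proof. by rewrite /malg_ext big1 // => k _; rewrite scaler0. Qed.

End MalgExtension.

Section MalgBasisMaps.
Variables (K : fieldType) (T : choiceType).
Local Notation V := {malg K[T]}.
Implicit Types (v : V).

Lemma malg_ext_comp (W : lmodType K) (F : T -> W) (h : T -> V) v :
  malg_ext F (malg_ext h v) = malg_ext (malg_ext F \o h) v.
Proof.
rewrite [malg_ext h v]/malg_ext [RHS]/malg_ext linear_sum.
by apply: eq_bigr => k _; rewrite linearZ.
Qed.

Lemma mcoeff_malg_ext (h : T -> V) v u :
  (malg_ext h v)@_u = \sum_(k <- msupp v) v@_k * (h k)@_u.
Proof. by rewrite /malg_ext raddf_sum; apply: eq_bigr => k _ /=; rewrite mcoeffZ. Qed.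

Definition relabel (m : T -> T) : T -> V := fun k => << m k >>.

Lemma mcoeff_relabel (m : T -> T) v u :
  (malg_ext (relabel m) v)@_u = \sum_(k <- msupp v | m k == u) v@_k.
Proof.
rewrite mcoeff_malg_ext [RHS]big_mkcond; apply: eq_bigr => k _ /=.
by rewrite /relabel mcoeffU; case: (m k == u); rewrite ?mulr1 ?mulr0.
Qed.

Lemma mcoeff_relabel_inj (m : T -> T) v u : injective m ->
  (malg_ext (relabel m) v)@_(m u) = v@_u.
Proof.
move=> m_inj; rewrite mcoeff_relabel (eq_bigl (pred1 u)) => [|k]; last first.
  exact: inj_eq.
have [uv|uv] := boolP (u \in msupp v).
  by rewrite -big_filter filter_pred1_uniq ?fset_uniq // big_seq1.
by rewrite (mcoeff_outdom uv) big1 // => k /eqP->; exact: mcoeff_outdom.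
Qed.

Lemma mcoeff_relabel_notin (m : T -> T) v u : (forall k, m k != u) ->
  (malg_ext (relabel m) v)@_u = 0.
Proof. by move=> mu; rewrite mcoeff_relabel big_pred0 // => k; exact/negbTE. Qed.

End MalgBasisMaps.

Section BasisOperators.
Variables (K : fieldType) (T : choiceType).
Local Notation V := {malg K[T]}.
Local Notation Op := (T -> V).

Definition opbr (A B : Op) : Op := fun w => malg_ext A (B w) - malg_ext B (A w).

Lemma malg_ext_opbr (A B : Op) v :
  malg_ext (opbr A B) v = malg_ext A (malg_ext B v) - malg_ext B (malg_ext A v).
Proof. by rewrite malg_ext_funB !malg_ext_comp. Qed.

Lemma opbr_lie : is_lie_bracket opbr.
Proof.
split.
- move=> a A B C; apply/funext => w; rewrite /opbr /= malg_ext_funP linearP.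
  by rewrite scalerBr opprD addrACA.
- move=> a A B C; apply/funext => w; rewrite /opbr /= malg_ext_funP linearP.
  by rewrite scalerBr opprD addrACA.
- by move=> A; apply/funext => w; rewrite /opbr subrr.
move=> A B C; apply/funext => w.
have expand X Y Z : opbr X (opbr Y Z) w =
    malg_ext X (malg_ext Y (Z w)) - malg_ext X (malg_ext Z (Y w))
    - (malg_ext Y (malg_ext Z (X w)) - malg_ext Z (malg_ext Y (X w))).
  by rewrite {1}/opbr malg_ext_opbr -(linearB (malg_ext X)).
have jacobi6 (a b c d e f : V) :
    a - b - (c - d) + (c - e - (f - b)) + (f - d - (a - e)) = 0.
  rewrite !opprB !addrA.
  rewrite (@GRing.add V).[ACl ((1*12)*(2*7)*(3*10)*(4*5)*(6*11)*(8*9))] /=.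
  by rewrite !(addrN, addNr, addr0).
change (opbr A (opbr B C) w + opbr B (opbr C A) w + opbr C (opbr A B) w = 0).
by rewrite !expand jacobi6.
Qed.

End BasisOperators.

Section Words.
Variables (K : fieldType) (A : choiceType).
Local Notation word := (seq A).
Local Notation V := {malg K[word]}.
Local Notation Op := (word -> V).

Definition pre (l : A) : Op := relabel K (cons l).
Definition app (l : A) : Op := relabel K (rcons^~ l).

Definition nilfree (v : V) := v@_[::] = 0.
Definition nilfree_op (F : Op) := forall w, nilfree (F w).
Definition commute_app (l : A) (F : Op) :=
  forall w, F (rcons w l) = malg_ext (app l) (F w).

Lemma malg_ext_nilfree (F : Op) v : nilfree_op F -> nilfree (malg_ext F v).
Proof.
by move=> F0; rewrite /nilfree mcoeff_malg_ext big1 // => k _; rewrite F0 mulr0.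
Qed.

Lemma pre_nilfree l : nilfree_op (pre l).
Proof. by move=> w; rewrite /nilfree mcoeffU. Qed.

Lemma nilfree_op_lie_closed : lie_closed (@opbr K _) nilfree_op.
Proof.
split=> [w|a F G F0 G0 w|F G F0 G0 w]; rewrite /nilfree ?mcoeff0 //.
  by change ((a *: F w + G w)@_[::] = 0); rewrite mcoeffD mcoeffZ F0 G0 mulr0 addr0.
by rewrite /opbr mcoeffB !malg_ext_nilfree // subrr.
Qed.

Lemma commute_app_ext l (F : Op) v : commute_app l F ->
  malg_ext F (malg_ext (app l) v) = malg_ext (app l) (malg_ext F v).
Proof.
move=> Fl; rewrite !malg_ext_comp; congr malg_ext; apply/funext => w /=.
by rewrite /app /relabel malg_extU Fl.
Qed.

Lemma commute_app_pre l l' : commute_app l (pre l').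
Proof. by move=> w; rewrite /pre /relabel malg_extU. Qed.

Lemma commute_app_lie_closed l : lie_closed (@opbr K _) (commute_app l).
Proof.
split=> [w|a F G Fl Gl w|F G Fl Gl w] /=; first by rewrite linear0.
  change (a *: F (rcons w l) + G (rcons w l) = malg_ext (app l) (a *: F w + G w)).
  by rewrite Fl Gl linearP.
by rewrite /opbr Fl Gl !commute_app_ext // linearB.
Qed.

(* The coefficient of [a :: w] in [v] is that of [rcons (a :: w) l] in
   [v * l = l * v], which is [0] as soon as [l != a]. *)
Lemma nilfree_commute2_eq0 (l1 l2 : A) v : l1 != l2 -> nilfree v ->
  malg_ext (pre l1) v = malg_ext (app l1) v ->
  malg_ext (pre l2) v = malg_ext (app l2) v -> v = 0.
Proof.
move=> l12 v0 e1 e2; apply/malgP => -[|a w]; rewrite mcoeff0 //.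
have [l [la el]] : exists l, l != a /\ malg_ext (pre l) v = malg_ext (app l) v.
  by case: (eqVneq l1 a) => [<-|]; [exists l2; rewrite eq_sym | exists l1].
rewrite -(mcoeff_relabel_inj v (a :: w) (rcons_injl l)) -/(app l) -el rcons_cons.
by rewrite mcoeff_relabel_notin // => k; apply: contra la => /eqP[->].
Qed.

End Words.

Arguments pre_nilfree {K A} l.
Arguments commute_app_pre {K A} l l'.

Section WordRepresentation.
Variables (K : fieldType) (g : nat) (i0 : 'I_g).

Definition letter := (bool * 'I_g)%type.
Definition xl k : letter := (false, k).
Definition yl k : letter := (true, k).
Local Notation V := {malg K[seq letter]}.
Local Notation Op := (seq letter -> V).

Definition xy_cross (w : seq letter) : V :=
  \sum_(k < g | k != i0) (<< [:: xl k, yl k & w] >> - << [:: yl k, xl k & w] >>).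

(* Left multiplication by [xl i0], corrected on words starting with [yl i0]
   so that the relation [\sum_k [xop k, yop k] = 0] holds. *)
Fixpoint xop0 (w : seq letter) : V :=
  if w is l :: w' then
    if l == yl i0 then malg_ext (pre K (yl i0)) (xop0 w') - xy_cross w'
    else << xl i0 :: l :: w' >>
  else << [:: xl i0] >>.

Definition xop k : Op := if k == i0 then xop0 else pre K (xl k).
Definition yop k : Op := pre K (yl k).

Lemma word_rep_relation : \sum_(k < g) opbr (xop k) (yop k) = 0.
Proof.
apply/funext => w; rewrite fct_sumE (bigD1 i0) //= /opbr /xop /yop.
rewrite eqxx malg_extU /= eqxx.
rewrite [_ - _ - _]addrAC subrr add0r addrC; apply/eqP; rewrite subr_eq0; apply/eqP.
by apply: eq_bigr => k /negPf->; rewrite !malg_extU.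
Qed.

Lemma xop0_nilfree : nilfree_op xop0.
Proof.
elim=> [|l w IH]; rewrite /nilfree /= ?mcoeffU //.
case: eqP => _; last by rewrite mcoeffU.
rewrite mcoeffB (malg_ext_nilfree _ (pre_nilfree _)) sub0r /xy_cross raddf_sum.
rewrite big1 ?oppr0 //.
by move=> j _ /=; rewrite mcoeffB !mcoeffU subrr.
Qed.

Lemma xop_nilfree k : nilfree_op (xop k).
Proof. by rewrite /xop; case: eqP => _; [exact: xop0_nilfree | exact: pre_nilfree]. Qed.

Lemma xop0_commute_app l : l != yl i0 -> commute_app l xop0.
Proof.
move=> l_y0 w; elim: w => [|l' w IH] /=; first by rewrite (negPf l_y0) malg_extU.
case: eqP => _; last by rewrite malg_extU.
rewrite IH linearB (commute_app_ext _ (commute_app_pre _ _)); congr (_ - _).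
rewrite /xy_cross linear_sum; apply: eq_bigr => j _.
by rewrite (linearB (malg_ext _)) /= !malg_extU.
Qed.

Lemma xop_commute_app l k : l != yl i0 -> commute_app l (xop k).
Proof.
rewrite /xop => l_y0; case: eqP => _; first exact: xop0_commute_app.
exact: commute_app_pre.
Qed.

End WordRepresentation.

Section Presentation.
Variables (K : fieldType) (g : nat) (L : lmodType K) (brL : L -> L -> L)
  (x y : 'I_g -> L) (t : L) (i0 : 'I_g).
Hypotheses (HL : is_lie_bracket brL) (Hrel : tg1_relations brL x y t)
  (Hgen : lie_generated brL
     (fun v => (exists k, v = x k) \/ (exists k, v = y k) \/ v = t)).
Local Notation cc := (2%:R - (2 * g)%:R : K).
Local Notation Op := (seq (letter g) -> {malg K[seq (letter g)]}).

Lemma tg1_t_central v : brL t v = 0.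
Proof.
case: Hrel => tx ty _; elim/Hgen: v.
- by move=> _ [[k ->]|[[k ->]|->]]; rewrite ?tx ?ty ?br_alt.
- exact: br0r.
- by move=> a u v tu tv; rewrite brDr // brZr // tu tv scaler0 addr0.
- by move=> u v tu tv; rewrite br_leibniz // tu tv br0l // br0r // addr0.
Qed.

Lemma tg1_sum_off_i0 : \sum_(k < g | k != i0) brL (x k) (y k) =
  - (cc *: t) - brL (x i0) (y i0).
Proof. by case: Hrel => _ _ <-; rewrite [in RHS](bigD1 i0) //= addrC addrK. Qed.

Definition eqmod_t (a b : L) := exists c : K, a = b + c *: t.

Lemma eqmod_t_refl a : eqmod_t a a.
Proof. by exists 0; rewrite scale0r addr0. Qed.

Lemma eqmod_t_trans a b d : eqmod_t a b -> eqmod_t b d -> eqmod_t a d.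
Proof. by move=> [c1 ->] [c2 ->]; exists (c2 + c1); rewrite scalerDl addrA. Qed.

Lemma eqmod_tP c a1 b1 a2 b2 : eqmod_t a1 b1 -> eqmod_t a2 b2 ->
  eqmod_t (c *: a1 + a2) (c *: b1 + b2).
Proof.
move=> [c1 ->] [c2 ->]; exists (c * c1 + c2).
by rewrite scalerDr scalerA scalerDl addrACA.
Qed.

Lemma eqmod_tB a1 b1 a2 b2 : eqmod_t a1 b1 -> eqmod_t a2 b2 ->
  eqmod_t (a1 - a2) (b1 - b2).
Proof.
by move=> e1 e2; have := eqmod_tP (-1) e2 e1; rewrite !scaleN1r ![- _ + _]addrC.
Qed.

Lemma eqmod_t_br u a b : eqmod_t a b -> eqmod_t (brL u a) (brL u b).
Proof.
move=> [c ->]; rewrite brDr // brZr // (brC HL u t) tg1_t_central oppr0 scaler0 addr0.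
exact: eqmod_t_refl.
Qed.

Lemma eqmod_t_sum (I : eqType) (r : seq I) (F G : I -> L) :
  {in r, forall i, eqmod_t (F i) (G i)} ->
  eqmod_t (\sum_(i <- r) F i) (\sum_(i <- r) G i).
Proof.
elim: r => [|i r IH] FG; first by rewrite !big_nil; exact: eqmod_t_refl.
rewrite !big_cons; have := eqmod_tP 1 (FG i (mem_head _ _)).
rewrite !scale1r; apply; apply: IH => j jr; apply: FG; exact: mem_behead.
Qed.

Definition gen (l : letter g) : L := if l.1 then y l.2 else x l.2.

Fixpoint right_normed (w : seq (letter g)) : L :=
  if w is l :: w' then
    if w' is [::] then gen l else brL (gen l) (right_normed w')
  else 0.
Arguments right_normed : simpl nomatch.

Local Notation theta := (malg_ext right_normed).

Lemma theta_pre l v : nilfree v ->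
  theta (malg_ext (pre K l) v) = brL (gen l) (theta v).
Proof.
move=> v0; rewrite malg_ext_comp [malg_ext right_normed v]/malg_ext br_sumr //.
apply: eq_big_seq => -[|l' w] vw; last by rewrite /= malg_extU brZr.
by rewrite -mcoeff_neq0 v0 eqxx in vw.
Qed.

Lemma theta_cross_nil : eqmod_t (theta (xy_cross K i0 [::]))
                                (- (brL (x i0) (y i0) *+ 2)).
Proof.
rewrite /xy_cross linear_sum.
under eq_bigr => k _ do
  rewrite (linearB (malg_ext _)) /= !malg_extU /= /gen /= (brC HL (y k)) opprK -mulr2n.
rewrite sumrMnl tg1_sum_off_i0 mulrnBl; exists (- cc *+ 2).
by rewrite addrC -scalerMnl scaleNr.
Qed.

Lemma theta_cross w : w != [::] ->
  theta (xy_cross K i0 w) = - brL (brL (x i0) (y i0)) (right_normed w).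
Proof.
case: w => // l w _; rewrite /xy_cross linear_sum.
under eq_bigr => k _ do
  rewrite (linearB (malg_ext _)) /= !malg_extU /= /gen /= br_leibniz // addrK.
rewrite -br_suml // tg1_sum_off_i0 brBl // brNl // brZl // tg1_t_central.
by rewrite scaler0 oppr0 sub0r.
Qed.

Lemma theta_xop0 w : w != [::] ->
  eqmod_t (theta (xop0 K i0 w)) (brL (x i0) (right_normed w)).
Proof.
elim: w => // l w IH _ /=; case: ifP => [/eqP->|_]; last first.
  by rewrite malg_extU; exact: eqmod_t_refl.
rewrite (linearB (malg_ext _)) /= theta_pre; last exact: xop0_nilfree.
case: w IH => [|l' w] IH.
  have := eqmod_tB (eqmod_t_refl (brL (y i0) (x i0))) theta_cross_nil.
  rewrite /= malg_extU /= opprK (brC HL (y i0)) mulr2n addrA addNr add0r.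
  by apply: eqmod_t_trans; exact: eqmod_t_refl.
rewrite theta_cross //.
apply: eqmod_t_trans (eqmod_tB (eqmod_t_br (y i0) (IH isT)) (eqmod_t_refl _)) _.
rewrite [right_normed (_ :: _ :: _)]/= /gen /= (br_leibniz HL (x i0)) opprK addrC.
exact: eqmod_t_refl.
Qed.

Lemma theta_ext_xop0 v : nilfree v ->
  eqmod_t (theta (malg_ext (xop0 K i0) v)) (brL (x i0) (theta v)).
Proof.
move=> v0; rewrite malg_ext_comp [malg_ext right_normed v]/malg_ext br_sumr //.
rewrite [malg_ext _ v]/malg_ext; apply: eqmod_t_sum => w vw /=.
have w_nil : w != [::] by apply: contraTneq vw => ->; rewrite -mcoeff_neq0 v0 eqxx.
by have := eqmod_tP (v@_w) (theta_xop0 w_nil) (eqmod_t_refl 0); rewrite !addr0 brZr.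
Qed.

Section RepresentationMorphism.
Variable f : {linear L -> Op}.
Hypotheses (fB : forall u v, f (brL u v) = opbr (f u) (f v))
  (fx : forall k, f (x k) = xop K i0 k) (fy : forall k, f (y k) = yop K k)
  (ft : f t = 0).

Lemma f_lie_closed (P : Op -> Prop) :
  lie_closed (@opbr K _) P -> (forall k, P (xop K i0 k)) -> (forall k, P (yop K k)) ->
  forall u, P (f u).
Proof.
move=> PC Px Py; have [P0 _ _] := PC; apply: (lie_generated_image Hgen fB PC).
by move=> _ [[k ->]|[[k ->]|->]]; rewrite ?fx ?fy ?ft.
Qed.

Lemma f_nilfree u : nilfree_op (f u).
Proof.
apply: f_lie_closed u; [exact: nilfree_op_lie_closed | exact: xop_nilfree |].
by move=> k; exact: pre_nilfree.
Qed.

Lemma f_commute_app l u : l != yl i0 -> commute_app l (f u).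
Proof.
move=> l_y0; apply: f_lie_closed u; first exact: commute_app_lie_closed.
  by move=> k; exact: xop_commute_app.
by move=> k; exact: commute_app_pre.
Qed.

Lemma theta_f_ad u v : nilfree v ->
  eqmod_t (theta (malg_ext (f u) v)) (brL u (theta v)).
Proof.
elim/Hgen: u v.
- move=> _ [[k ->]|[[k ->]|->]] v v0.
  + rewrite fx /xop; case: eqP => [->|_]; first exact: theta_ext_xop0.
    by rewrite theta_pre //; exact: eqmod_t_refl.
  + by rewrite fy theta_pre //; exact: eqmod_t_refl.
  + by rewrite ft malg_ext_fun0 linear0 tg1_t_central; exact: eqmod_t_refl.
- move=> v _; rewrite (linear0 f) malg_ext_fun0 linear0 (br0l HL).
  exact: eqmod_t_refl.
- move=> a u1 u2 IH1 IH2 v v0.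
  rewrite (linearP f) malg_ext_funP (linearP (malg_ext _)) /= (brDl HL) (brZl HL).
  exact: eqmod_tP (IH1 v v0) (IH2 v v0).
move=> u1 u2 IH1 IH2 v v0; rewrite fB malg_ext_opbr (linearB (malg_ext _)) /=.
apply: eqmod_t_trans (eqmod_tB (IH1 _ (malg_ext_nilfree _ (f_nilfree u2)))
                               (IH2 _ (malg_ext_nilfree _ (f_nilfree u1)))) _.
apply: eqmod_t_trans
  (eqmod_tB (eqmod_t_br u1 (IH2 v v0)) (eqmod_t_br u2 (IH1 v v0))) _.
by rewrite (br_leibniz HL u1) addrK; exact: eqmod_t_refl.
Qed.

(* Centrality makes [f z] commute with left multiplication by a letter, while
   [f_commute_app] gives right multiplication. *)
Lemma central_f_nil i1 z : i0 != i1 -> (forall v, brL z v = 0) -> f z [::] = 0.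
Proof.
move=> i01 zc.
have pre_app l : l != yl i0 -> f (gen l) = pre K l ->
    malg_ext (pre K l) (f z [::]) = malg_ext (app K l) (f z [::]).
  move=> l_y0 fl; have := congr1 (fun F => F [::]) (fB z (gen l)).
  rewrite zc linear0 fl /opbr -[pre K l [::]]/(<< [:: l] >>) malg_extU /=.
  move/eqP; rewrite eq_sym subr_eq0 => /eqP <-.
  by rewrite -[[:: l]]/(rcons [::] l) f_commute_app.
apply: (@nilfree_commute2_eq0 _ _ (xl i1) (yl i1)) => //; first exact: f_nilfree.
  by apply: pre_app => //; rewrite /gen /= fx /xop eq_sym (negPf i01).
apply: pre_app; last by rewrite /gen /= fy.
by apply: contra i01 => /eqP[->].
Qed.

Section Derivation.
Variable E : {linear L -> L}.
Hypotheses (ED : forall u v, E (brL u v) = brL u (E v) + brL (E u) v)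
  (Ex : forall k, E (x k) = x k) (Ey : forall k, E (y k) = y k)
  (Et : exists c, E t = c *: t).

Lemma theta_f_nil u : eqmod_t (theta (f u [::])) (E u).
Proof.
elim/Hgen: u.
- move=> _ [[k ->]|[[k ->]|->]].
  + rewrite fx Ex /xop; case: eqP => [->|_]; rewrite /= malg_extU.
      exact: eqmod_t_refl.
    exact: eqmod_t_refl.
  + by rewrite fy Ey /= malg_extU; exact: eqmod_t_refl.
  + have [c ->] := Et; rewrite ft [X in malg_ext _ X]/= (linear0 (malg_ext _)).
    by exists (- c); rewrite scaleNr addrN.
- rewrite (linear0 f) (linear0 E) [X in malg_ext _ X]/= (linear0 (malg_ext _)).
  exact: eqmod_t_refl.
- move=> a u v IHu IHv; rewrite (linearP f) (linearP E) [X in malg_ext _ X]/=.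
  by rewrite (linearP (malg_ext _)); exact: eqmod_tP.
move=> u v IHu IHv; rewrite fB ED /opbr (linearB (malg_ext _)) /=.
apply: eqmod_t_trans (eqmod_tB (theta_f_ad u (f_nilfree v [::]))
                               (theta_f_ad v (f_nilfree u [::]))) _.
apply: eqmod_t_trans (eqmod_tB (eqmod_t_br u IHv) (eqmod_t_br v IHu)) _.
by rewrite (brC HL v) opprK; exact: eqmod_t_refl.
Qed.

Lemma central_degree i1 z : i0 != i1 -> (forall v, brL z v = 0) ->
  exists c, E z = c *: t.
Proof.
move=> i01 zc; have [c] := theta_f_nil z.
rewrite (central_f_nil i01 zc) linear0 => Ez.
by exists (- c); apply/eqP; rewrite scaleNr -addr_eq0 -Ez.
Qed.

End Derivation.
End RepresentationMorphism.

End Presentation.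

Section DualNumbers.
Variables (K : fieldType) (W : lmodType K) (br : W -> W -> W).
Hypothesis HB : is_lie_bracket br.

(* [W] tensored with [K[e]/(e^2)]: a Lie morphism [u |-> (u, D u)] into it
   amounts to a derivation [D]. *)
Definition dual_br (p q : W * W) : W * W := (br p.1 q.1, br p.1 q.2 + br p.2 q.1).

Lemma dual_br_lie : is_lie_bracket dual_br.
Proof.
split.
- move=> a [p1 p2] [q1 q2] [r1 r2]; rewrite /dual_br /= !(brDl HB) !(brZl HB).
  by congr (_, _); rewrite /= scalerDr addrACA.
- move=> a [p1 p2] [q1 q2] [r1 r2]; rewrite /dual_br /= !(brDr HB) !(brZr HB).
  by congr (_, _); rewrite /= scalerDr addrACA.
- by move=> [p1 p2]; rewrite /dual_br /= (br_alt HB) (brC HB p2) subrr.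
move=> [p1 p2] [q1 q2] [r1 r2]; rewrite /dual_br /=.
congr (_, _); first exact: br_jacobi.
rewrite /= !(brDr HB) !addrA.
rewrite (@GRing.add W).[ACl ((1*5*9)*(2*6*7)*(3*4*8))] /=.
by rewrite !(br_jacobi HB) !addr0.
Qed.

End DualNumbers.

Lemma tg1_degree_derivation (K : fieldType) (g : nat) (L : lmodType K)
    (brL : L -> L -> L) (x y : 'I_g -> L) (t : L) :
  is_tg1 brL x y t ->
  exists E : {linear L -> L},
    [/\ forall u v, E (brL u v) = brL u (E v) + brL (E u) v,
        forall k, E (x k) = x k, forall k, E (y k) = y k & E t = 2%:R *: t].
Proof.
case=> HL Hrel Hgen Huniv; have tc := tg1_t_central HL Hrel Hgen.
have rels : tg1_relations (dual_br brL) (fun k => (x k, x k)) (fun k => (y k, y k))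
                          (t, 2%:R *: t).
  have [_ _ Hsum] := Hrel.
  split=> [k|k|]; rewrite ?/dual_br /= ?(brZl HL) ?tc ?scaler0 ?addr0 //.
  rewrite [LHS]surjective_pairing !raddf_sum /=; congr (_, _); first exact: Hsum.
  by rewrite big_split /= Hsum scaler_nat -scalerMnr mulr2n opprD.
have [D [DL DB Dx Dy Dt]] := Huniv _ _ _ _ _ (dual_br_lie HL) rels.
have D0 : D 0 = 0 :=
  linear0 (HB.pack_for {linear L -> (L * L)%type} D
                       (GRing.isLinear.Build _ _ _ _ D DL)).
have D1 u : (D u).1 = u.
  elim/Hgen: u => [_ [[k ->]|[[k ->]|->]]|||]; rewrite ?Dx ?Dy ?Dt ?D0 //.
  - by move=> a u v Du Dv; rewrite DL /= Du Dv.
  - by move=> u v Du Dv; rewrite DB /= Du Dv.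
pose E u := (D u).2.
have EL : linear E by move=> a u v; rewrite /E DL.
exists (HB.pack_for {linear L -> L} E (GRing.isLinear.Build _ _ _ _ E EL)).
split=> /=.
- by move=> u v; rewrite /E DB /= !D1.
- by move=> k; rewrite /E Dx.
- by move=> k; rewrite /E Dy.
by rewrite /E Dt.
Qed.

Section Heisenberg.
Variable K : fieldType.

Definition heis := ((K^o * K^o) * K^o)%type.
Definition heis_br (p q : heis) : heis := ((0, 0), p.1.1 * q.1.2 - p.1.2 * q.1.1).

Lemma heis_br_lie : is_lie_bracket heis_br.
Proof.
split.
- move=> a [[p1 p2] p3] [[q1 q2] q3] [[r1 r2] r3]; rewrite /heis_br /=.
  by congr (_, _); rewrite /= ?scaler0 ?addr0 // /GRing.scale /=; ring.
- move=> a [[p1 p2] p3] [[q1 q2] q3] [[r1 r2] r3]; rewrite /heis_br /=.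
  by congr (_, _); rewrite /= ?scaler0 ?addr0 // /GRing.scale /=; ring.
- by move=> p; rewrite /heis_br mulrC subrr.
by move=> p q r; rewrite /heis_br /= !mulr0 subrr !addr0.
Qed.

End Heisenberg.

Lemma tg1_t_neq0 (K : fieldType) (g : nat) (L : lmodType K)
    (brL : L -> L -> L) (x y : 'I_g -> L) (t : L) (i0 : 'I_g) :
  is_tg1 brL x y t -> (2%:R - (2 * g)%:R : K) != 0 -> t != 0.
Proof.
case=> _ _ _ Huniv cc0.
pose x' k : heis K := if k == i0 then ((1, 0), 0) else 0.
pose y' k : heis K := if k == i0 then ((0, 1), 0) else 0.
pose t' : heis K := ((0, 0), - (2%:R - (2 * g)%:R)^-1).
have rels : tg1_relations (@heis_br K) x' y' t'.
  split=> [k|k|]; rewrite ?/heis_br /= ?mul0r ?subrr //.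
  rewrite (bigD1 i0) //= big1 => [|k /negPf k0]; last first.
    by rewrite /x' k0 /heis_br /= !mul0r subrr.
  rewrite /x' /y' eqxx /heis_br /= addr0.
  congr (_, _); rewrite /= ?scaler0 ?oppr0 // /GRing.scale /=.
  by rewrite mulr1 mulr0 subr0 mulrN opprK divff.
have [h [hL _ _ _ ht]] := Huniv _ _ _ _ _ (@heis_br_lie K) rels.
have h0 : h 0 = 0 :=
  linear0 (HB.pack_for {linear L -> heis K} h (GRing.isLinear.Build _ _ _ _ h hL)).
apply/eqP => t0; move: ht; rewrite t0 h0 => /(congr1 snd) /= /eqP.
by rewrite eq_sym oppr_eq0 invr_eq0 (negPf cc0).
Qed.

Section PositiveEigenSums.
Variables (K : fieldType) (W : lmodType K) (E : {linear W -> W}).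

Definition pos_eigen_sum (u : W) := exists s : seq (nat * W),
  u = \sum_(p <- s) p.2 /\ {in s, forall p, E p.2 = p.1.+1%:R *: p.2}.

Lemma derivation_pos_eigen_sum (br : W -> W -> W) (S : W -> Prop) :
  is_lie_bracket br -> lie_generated br S ->
  (forall u v, E (br u v) = br u (E v) + br (E u) v) ->
  (forall s, S s -> exists n, E s = n.+1%:R *: s) ->
  forall u, pos_eigen_sum u.
Proof.
move=> HB Hgen ED ES; elim/Hgen.
- move=> s /ES[n Es]; exists [:: (n, s)]; rewrite big_seq1.
  by split=> // p; rewrite inE => /eqP->.
- by exists [::]; rewrite big_nil.
- move=> a u v [s1 [-> h1]] [s2 [-> h2]].
  exists ([seq (p.1, a *: p.2) | p <- s1] ++ s2).
  split; first by rewrite big_cat big_map scaler_sumr.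
  move=> p; rewrite mem_cat => /orP[/mapP[q qs ->]|]; last exact: h2.
  by rewrite /= linearZZ h1 // !scalerA mulrC.
move=> u v [s1 [-> h1]] [s2 [-> h2]].
exists [seq ((p.1 + q.1).+1, br p.2 q.2) | p <- s1, q <- s2]; split.
  rewrite big_allpairs_dep (br_suml HB); apply: eq_bigr => p _.
  by rewrite (br_sumr HB).
move=> _ /allpairsP[[p q] [ps qs ->]] /=.
rewrite ED (h1 p) // (h2 q) // (brZr HB) (brZl HB) -scalerDl -natrD.
by rewrite addSn addnS addnC.
Qed.

Hypothesis hK : [pchar K] =i pred0.

(* Induction on a bound [m] for the eigenvalues: as [E u = 0], [u] is also
   the sum of the [p.2 - E p.2 / m], in which eigenvalue [m] cancels. *)
Lemma pos_eigen_sum_ker u : pos_eigen_sum u -> E u = 0 -> u = 0.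
Proof.
move=> [s [-> hs]].
have [m sm] : exists m, {in s, forall p, p.1 < m}%N.
  by exists (\max_(p <- s) p.1.+1) => p ps; exact: (leq_bigmax_seq p).
elim: m s hs sm => [|m IH] s hs sm hE.
  by case: s hs sm hE => [|p s] _ sm; [rewrite big_nil | have := sm p (mem_head _ _)].
have m0 : m.+1%:R != 0 :> K by rewrite ((pcharf0P _).1 hK).
pose s' := [seq (p.1, p.2 - (m.+1%:R)^-1 *: E p.2) | p <- s & p.1 != m].
have ss' : \sum_(p <- s) p.2 = \sum_(p <- s') p.2.
  rewrite big_map big_filter [RHS]big_mkcond /=.
  transitivity (\sum_(p <- s) (p.2 - (m.+1%:R)^-1 *: E p.2)).
    by rewrite sumrB -scaler_sumr -linear_sum hE scaler0 subr0.
  apply: eq_big_seq => p ps; case: eqP => // pm.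
  by rewrite hs // pm scalerA mulVf // scale1r subrr.
rewrite ss' in hE *; apply: IH hE.
  move=> q /mapP[p]; rewrite mem_filter => /andP[_ ps] -> /=.
  rewrite (linearB E) (linearZZ E) hs // (linearZZ E) hs // scalerBr !scalerA.
  by rewrite [_^-1 * _]mulrC.
move=> q /mapP[p]; rewrite mem_filter => /andP[pm ps] -> /=.
by have := sm p ps; rewrite ltnS leq_eqVlt (negPf pm).
Qed.

End PositiveEigenSums.

Lemma tg1_central_degree (K : fieldType) (g : nat) (L : lmodType K)
    (brL : L -> L -> L) (x y : 'I_g -> L) (t : L) (i0 i1 : 'I_g)
    (E : {linear L -> L}) :
  is_tg1 brL x y t -> i0 != i1 ->
  (forall u v, E (brL u v) = brL u (E v) + brL (E u) v) ->
  (forall k, E (x k) = x k) -> (forall k, E (y k) = y k) -> (exists c, E t = c *: t) ->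
  forall z, (forall v, brL z v = 0) -> exists c, E z = c *: t.
Proof.
case=> HL Hrel Hgen Huniv i01 ED Ex Ey Et z zc.
have rels : tg1_relations (@opbr K _) (xop K i0) (@yop K g) 0.
  split=> [k|k|]; rewrite ?(br0l (opbr_lie _ _)) //.
  by rewrite scaler0 oppr0 word_rep_relation.
have [f [fL fB fx fy ft]] := Huniv _ _ _ _ _ (opbr_lie K _) rels.
pose fl := HB.pack_for {linear L -> _} f (GRing.isLinear.Build _ _ _ _ f fL).
exact: (central_degree (f := fl) HL Hrel Hgen fB fx fy ft ED Ex Ey Et i01 zc).
Qed.

Theorem lemma8p2 (K : fieldType) (hK : [pchar K] =i pred0)
    (g : nat) (hg : (2 <= g)%N)
    (L : lmodType K) (brL : L -> L -> L) (x y : 'I_g -> L) (t : L)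
    (H : is_tg1 brL x y t) :
  t != 0 /\ (forall z : L, (forall v : L, brL z v = 0) <-> exists c : K, z = c *: t).
Proof.
have [HL Hrel Hgen _] := H.
pose i0 : 'I_g := Ordinal (ltnW hg); pose i1 : 'I_g := Ordinal hg.
have natr_neq0 n : (n.+1%:R : K) != 0 by rewrite ((pcharf0P _).1 hK).
have cc0 : (2%:R - (2 * g)%:R : K) != 0.
  rewrite -opprB -natrB ?oppr_eq0; last by lia.
  by have -> : (2 * g - 2 = (2 * g - 3).+1)%N by lia.
split; first exact: tg1_t_neq0 i0 H cc0.
move=> z; split=> [zc|[c ->] v]; last first.
  by rewrite (brZl HL) (tg1_t_central HL Hrel Hgen) scaler0.
have [E [ED Ex Ey Et]] := tg1_degree_derivation H.
have [c Ez] :=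
  tg1_central_degree (i0 := i0) (i1 := i1) H isT ED Ex Ey (ex_intro _ _ Et) zc.
exists (c / 2%:R); apply/eqP; rewrite -subr_eq0; apply/eqP.
apply: (pos_eigen_sum_ker hK).
  apply: (derivation_pos_eigen_sum HL Hgen ED).
  move=> _ [[k ->]|[[k ->]|->]]; [exists 0%N | exists 0%N | exists 1%N] => //.
    by rewrite Ex scale1r.
  by rewrite Ey scale1r.
by rewrite linearB linearZZ Ez Et scalerA divfK ?natr_neq0 // subrr.
Qed.
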